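(* Let $n\ge2$ and $\rho\in\mathbb{C}\setminus\{-1,0,1\}$. For every $z\in\mathbb{C}$ with $z\neq\rho$ and $z\neq1/\rho$, put $$\lambda(\rho,z)=\frac{z(1-\rho^2)}{(z-\rho)(1-z\rho)}.$$ Then $$p_{2n}(\rho,z)=\frac{(z-\rho)^n(1-z\rho)^n}{\rho^n(1-\rho^2)^{n-1}}\,\psi_n\bigl(\rho,\lambda(\rho,z)\bigr).$$ Moreover, for $z\neq0$, $\lambda(\rho,z)=\sigma(\rho,-i\ln z)$, i.e. $\lambda(\rho,z)=\frac{1-\rho^2}{1-\rho(z+z^{-1})+\rho^2}$.
   Context: $K_n(\rho)=\left[\rho^{|j-k|}\right]_{j,k=1}^n$ and $\psi_n(\rho,\lambda)=\det[\lambda I_n-K_n(\rho)]$ is its characteristic polynomial. $p_{2n}(\rho,z)=z^{2n}+(1+\rho^2)\sum_{k=1}^{n-1}z^{2k}-2\rho\sum_{k=0}^{n-1}z^{2k+1}+1$ (equal to $\frac{z^{2n}(z-\rho)^2-(\rho z-1)^2}{z^2-1}$ for $z\ne\pm1$). $\sigma(\rho,\theta)=\frac{1-\rho^2}{1-2\rho\cos\theta+\rho^2}$, extended to complex $\theta$ (so that with $\theta=-i\ln z$ one has $2\cos\theta=z+z^{-1}$). *)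

(* The complex numbers are modelled as R[i] = complex R
   for an arbitrary R : realType (real-closed library's complex.v). *)
From HB Require Import structures.
From mathcomp Require Import all_boot all_order all_algebra.
From mathcomp Require Import complex.
From mathcomp Require Import reals.
Set Implicit Arguments. Unset Strict Implicit. Unset Printing Implicit Defensive.
Import Order.TTheory GRing.Theory Num.Theory.
Local Open Scope ring_scope.

Definition Kmat (F : comNzRingType) (n : nat) (rho : F) : 'M[F]_n :=
  \matrix_(j < n, k < n) rho ^+ (maxn j k - minn j k)%N.

(* psi_n(rho, lambda) = det(lambda I_n - K_n(rho)): the characteristic
   polynomial of K_n(rho) (mxpoly's char_poly = det('X I - A)) evaluated at lambda *)
Definition psi (F : comNzRingType) (n : nat) (rho lam : F) : F :=
  (char_poly (Kmat n rho)).[lam].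

Definition p2n (F : comNzRingType) (n : nat) (rho z : F) : F :=
  z ^+ (2 * n) + (1 + rho ^+ 2) * \sum_(1 <= k < n) z ^+ (2 * k)
  - 2 * rho * \sum_(0 <= k < n) z ^+ (2 * k + 1) + 1.

Definition lam (F : fieldType) (rho z : F) : F :=
  z * (1 - rho ^+ 2) / ((z - rho) * (1 - z * rho)).

(* sigma(rho,theta) = (1-rho^2)/(1 - 2 rho cos theta + rho^2), written in the
   variable z = e^{i theta} (theta = -i ln z), so that 2 cos theta = z + z^{-1}. *)
Definition sigma_z (F : fieldType) (rho z : F) : F :=
  (1 - rho ^+ 2) / (1 - rho * (z + z^-1) + rho ^+ 2).

(* Subtracting rho times the second row and column of l I - K_n(rho) from the
   first ones leaves a matrix whose first row and column vanish beyond their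
   first two entries, so psi_n satisfies the continuant recurrence
   psi_(n+2) = (l (1 + rho^2) - (1 - rho^2)) psi_(n+1) - rho^2 l^2 psi_n.
   On the other side p_(2n+4) = (1 + z^2) p_(2n+2) - z^2 p_(2n).  With
   a = (z - rho)(1 - z rho) and a l = z (1 - rho^2), the sequences
   p_(2n) (rho (1 - rho^2))^n and (1 - rho^2) a^n psi_n(l) obey the same
   second-order recurrence and the same initial values, hence coincide. *)

From HB Require Import structures.
From mathcomp Require Import all_boot all_order all_algebra.
From mathcomp Require Import complex reals ring.
Import Order.TTheory GRing.Theory Num.Theory.
Local Open Scope ring_scope.

Local Notation minor00 A := (row' ord0 (col' ord0 A)).

Section DetOps.
Context {R : comNzRingType}.

Lemma det_sub_row_mul {n} (A : 'M[R]_n) (i0 i1 : 'I_n) (a : R) : i0 != i1 ->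
  \det (\matrix_(i, j) if i == i0 then A i0 j - a * A i1 j else A i j) = \det A.
Proof.
move=> i01; set B := \matrix_(i, j) _.
pose C := \matrix_(i, j) if i == i0 then A i1 j else A i j.
have detC : \det C = 0.
  by apply: (determinant_alternate i01) => j; rewrite !mxE eqxx eq_sym (negPf i01).
rewrite (@determinant_multilinear _ _ B A C i0 1 (- a)); last 3 first.
- by apply/rowP => j; rewrite !mxE eqxx; ring.
- by apply/matrixP => i j; rewrite !mxE lift_eqF.
- by apply/matrixP => i j; rewrite !mxE lift_eqF.
by rewrite detC mul1r mulr0 addr0.
Qed.

Lemma det_sub_col_mul {n} (A : 'M[R]_n) (j0 j1 : 'I_n) (a : R) : j0 != j1 ->
  \det (\matrix_(i, j) if j == j0 then A i j0 - a * A i j1 else A i j) = \det A.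
Proof.
move=> j01; rewrite -det_tr -(det_tr A) -(det_sub_row_mul A^T _ _ a j01).
by congr (\det _); apply/matrixP => i j; rewrite !mxE.
Qed.

Lemma det_continuant_step m (A : 'M[R]_m.+2) :
    (forall j : 'I_m, A ord0 (lift ord0 (lift ord0 j)) = 0) ->
    (forall i : 'I_m, A (lift ord0 (lift ord0 i)) ord0 = 0) ->
  \det A = A ord0 ord0 * \det (minor00 A)
           - A ord0 (lift ord0 ord0) * A (lift ord0 ord0) ord0 * \det (minor00 (minor00 A)).
Proof.
move=> row0 col0.
rewrite (expand_det_row _ ord0) !big_ord_recl big1 => [|j _]; last by rewrite row0 mul0r.
rewrite /cofactor [\det (row' _ (col' (lift _ _) A))](expand_det_col _ ord0).
have lift10 : lift (lift ord0 ord0) ord0 = ord0 :> 'I_m.+2 by apply: val_inj.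
rewrite big_ord_recl big1 => [|i _]; last by rewrite !mxE lift10 col0 mul0r.
rewrite /cofactor !mxE lift10 !expr0 !expr1 !mul1r addr0.
have -> : row' ord0 (col' ord0 (row' ord0 (col' (lift ord0 ord0) A))) = minor00 (minor00 A).
  by apply/matrixP => i j; rewrite !mxE; congr (A _ _); apply: val_inj.
ring.
Qed.
End DetOps.

Section KmsCharMatrix.
Context {R : comNzRingType} (rho l : R).

Definition kms_entry (i j : nat) : R := l *+ (i == j) - rho ^+ (maxn i j - minn i j).

Definition kms_charmx m : 'M[R]_m := \matrix_(i < m, j < m) kms_entry i j.

Lemma psiE m : psi m rho l = \det (kms_charmx m).
Proof.
rewrite /psi /char_poly -horner_evalE -det_map_mx; congr (\det _).
apply/matrixP => i j; rewrite !mxE /= horner_evalE.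
by rewrite hornerD hornerN hornerC hornerMn hornerX.
Qed.

Lemma kms_entrySS i j : kms_entry i.+1 j.+1 = kms_entry i j.
Proof. by rewrite /kms_entry maxnSS minnSS subSS eqSS. Qed.

Lemma kms_entry_diag i : kms_entry i i = l - 1.
Proof. by rewrite /kms_entry eqxx maxnn minnn subnn. Qed.

Lemma kms_entry0S j : kms_entry 0 j.+1 = - rho ^+ j.+1.
Proof. by rewrite /kms_entry max0n min0n subn0 mulr0n sub0r. Qed.

Lemma kms_entryS0 i : kms_entry i.+1 0 = - rho ^+ i.+1.
Proof. by rewrite /kms_entry maxn0 minn0 subn0 mulr0n sub0r. Qed.

Lemma minor00_kms_charmx m : minor00 (kms_charmx m.+1) = kms_charmx m.
Proof. by apply/matrixP => i j; rewrite !mxE kms_entrySS. Qed.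

Lemma det_kms_charmxSS m :
  \det (kms_charmx m.+2) = (l * (1 + rho ^+ 2) - (1 - rho ^+ 2)) * \det (kms_charmx m.+1)
                           - rho ^+ 2 * l ^+ 2 * \det (kms_charmx m).
Proof.
set K := kms_charmx m.+2; set i1 : 'I_m.+2 := lift ord0 ord0.
pose Kr := \matrix_(i, j) if i == ord0 then K ord0 j - rho * K i1 j else K i j.
pose N := \matrix_(i, j) if j == ord0 then Kr i ord0 - rho * Kr i i1 else Kr i j.
have -> : \det K = \det N by rewrite det_sub_col_mul ?det_sub_row_mul.
rewrite det_continuant_step; last 2 first.
- by move=> j; rewrite !mxE /= kms_entry0S kms_entrySS kms_entry0S !exprS; ring.
- by move=> i; rewrite !mxE /= kms_entryS0 kms_entrySS kms_entryS0 !exprS; ring.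
have -> : minor00 N = kms_charmx m.+1.
  by apply/matrixP => i j; rewrite !mxE /= kms_entrySS.
rewrite minor00_kms_charmx !mxE /= !kms_entry_diag kms_entry0S kms_entryS0; ring.
Qed.
End KmsCharMatrix.

Lemma eq_from_rec2 {T : Type} (f : T -> T -> T) (u v : nat -> T) :
    (forall k, u k.+2 = f (u k.+1) (u k)) -> (forall k, v k.+2 = f (v k.+1) (v k)) ->
  u 0%N = v 0%N -> u 1%N = v 1%N -> u =1 v.
Proof.
move=> uS vS u0 u1; suff uv k : u k = v k /\ u k.+1 = v k.+1 by move=> k; case: (uv k).
by elim: k => [|k [uvk uvk1]] //; rewrite uS vS uvk uvk1.
Qed.

Section P2nRecurrence.
Context {R : comNzRingType} (rho z : R).

(* [p2n 0 rho z] is 2; the value 1 - rho^2 is the one that extends [p2n_seqSS] to k = 0. *)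
Definition p2n_seq k := if k is 0 then 1 - rho ^+ 2 else p2n k rho z.

Lemma p2n_seqS_sub k : p2n_seq k.+1 - p2n_seq k = z ^+ (2 * k) * (z - rho) ^+ 2.
Proof.
case: k => [|k]; rewrite /p2n_seq /p2n.
  rewrite big_geq // big_nat1 muln0 muln1 expr0 expr1 mulr0 addr0; ring.
rewrite big_nat_recr //= [\sum_(0 <= i < k.+2) _]big_nat_recr //=.
rewrite mulnS !exprD expr1; ring.
Qed.

Lemma p2n_seqSS k :
  p2n_seq k.+2 = (1 + z ^+ 2) * p2n_seq k.+1 - z ^+ 2 * p2n_seq k.
Proof.
have dS := p2n_seqS_sub k.+1; have d := p2n_seqS_sub k.
rewrite mulnS exprD in dS.
rewrite -(subrK (p2n_seq k.+1) (p2n_seq k.+2)) dS -(subrK (p2n_seq k) (p2n_seq k.+1)) d.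
ring.
Qed.
End P2nRecurrence.

Section P2nKms.
Context {R : comNzRingType} {rho z l : R}.
Hypothesis mul_denom_l : (z - rho) * (1 - z * rho) * l = z * (1 - rho ^+ 2).

Lemma p2n_seq_kms k :
  p2n_seq rho z k * (rho * (1 - rho ^+ 2)) ^+ k
  = (1 - rho ^+ 2) * ((z - rho) * (1 - z * rho)) ^+ k * \det (kms_charmx rho l k).
Proof.
set c := 1 - rho ^+ 2; set a := (z - rho) * (1 - z * rho).
have alE : a * l = z * c := mul_denom_l.
have adiagE : a * (l * (1 + rho ^+ 2) - c) = rho * c * (1 + z ^+ 2).
  by rewrite mulrBr mulrA alE /a /c; ring.
pose f x y := rho * c * (1 + z ^+ 2) * x - rho ^+ 2 * c ^+ 2 * z ^+ 2 * y.
move: k; apply: (@eq_from_rec2 _ f) => [k | k | | ].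
- by rewrite p2n_seqSS /f !exprS; ring.
- rewrite det_kms_charmxSS /f -/c.
  transitivity (c * a ^+ k * (a * (l * (1 + rho ^+ 2) - c) * a * \det (kms_charmx rho l k.+1)
                 - rho ^+ 2 * (a * l) ^+ 2 * \det (kms_charmx rho l k))).
    by rewrite !exprS; ring.
  by rewrite adiagE alE !exprS; ring.
- by rewrite det_mx00 !expr0 !mulr1.
- rewrite det_mx11 mxE kms_entry_diag /= /p2n big_geq // big_nat1.
  by rewrite muln1 muln0 !expr1 [RHS]mulrBr -[c * a * l]mulrA alE /a /c; ring.
Qed.
End P2nKms.

Section Lambda.
Context {F : fieldType}.
Implicit Types rho z : F.

Lemma lam_denom_neq0 rho z : rho != 0 -> z != rho -> z != rho^-1 ->
  (z - rho) * (1 - z * rho) != 0.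
Proof.
move=> rho_neq0 z_neq_rho z_neq_inv; rewrite mulf_neq0 ?subr_eq0 //.
by apply: contra z_neq_inv => /eqP zrho1; rewrite -[z](mulfK rho_neq0) -zrho1 div1r.
Qed.

Lemma mul_denom_lam {rho z} : (z - rho) * (1 - z * rho) != 0 ->
  (z - rho) * (1 - z * rho) * lam rho z = z * (1 - rho ^+ 2).
Proof. by move=> a_neq0; rewrite /lam mulrC divfK. Qed.

Lemma lam_sigma_z rho z : z != 0 -> lam rho z = sigma_z rho z.
Proof.
move=> z_neq0; rewrite /lam /sigma_z.
have -> : 1 - rho * (z + z^-1) + rho ^+ 2 = (z - rho) * (1 - z * rho) / z by field.
by rewrite invf_div mulrA [_ * z]mulrC.
Qed.

Lemma p2n_psi_lam n rho z : (0 < n)%N -> rho != 0 -> 1 - rho ^+ 2 != 0 ->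
    (z - rho) * (1 - z * rho) != 0 ->
  p2n n rho z = (z - rho) ^+ n * (1 - z * rho) ^+ n / (rho ^+ n * (1 - rho ^+ 2) ^+ n.-1)
                * psi n rho (lam rho z).
Proof.
case: n => [//|k] _ rho_neq0 c_neq0 a_neq0.
have key := p2n_seq_kms (mul_denom_lam a_neq0) k.+1.
have r_neq0 : rho ^+ k.+1 * (1 - rho ^+ 2) ^+ k != 0 by rewrite mulf_neq0 ?expf_neq0.
rewrite psiE -exprMn; apply: (mulIf r_neq0); rewrite mulrAC divfK //.
apply: (mulfI c_neq0); rewrite [RHS]mulrA -key /=.
by rewrite exprMn [(1 - rho ^+ 2) ^+ k.+1]exprS; ring.
Qed.
End Lambda.

Local Open Scope complex_scope.

Theorem lemma3p2 (R : realType) (n : nat) (rho : R[i]) :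
  (2 <= n)%N -> rho != 0 -> rho != 1 -> rho != -1 ->
  forall z : R[i], z != rho -> z != rho^-1 ->
    p2n n rho z =
      (z - rho) ^+ n * (1 - z * rho) ^+ n / (rho ^+ n * (1 - rho ^+ 2) ^+ n.-1)
        * psi n rho (lam rho z)
    /\ (z != 0 -> lam rho z = sigma_z rho z).
Proof.
move=> n_ge2 rho_neq0 rho_neq1 rho_neqN1 z z_neq_rho z_neq_inv; split; last exact: lam_sigma_z.
have c_neq0 : 1 - rho ^+ 2 != 0 by rewrite subr_eq0 eq_sym sqrf_eq1 negb_or rho_neq1.
apply: p2n_psi_lam => //; first exact: leq_trans n_ge2.
exact: lam_denom_neq0.
Qed.
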